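(* Let $n\ge2$ and $\nu\in\mathcal{F}_{C_n}$, writing $\nu(\alpha)=(\nu(\alpha)_1,\dots,\nu(\alpha)_{n+1})$. Then the map $\mathsf{b}$ from formulas to $\{0,1\}$ given by $\mathsf{b}(\alpha)=\nu(\alpha)_1$ is a $C_n$-bivaluation, and $\mathsf{b}(\alpha)=1$ iff $\nu(\alpha)\in D_n$.
   Context: $\Sigma$ has unary $\neg$ and binary $\wedge,\vee,\to$; formulas over a denumerable set of variables; $\alpha^0=\alpha$, $\alpha^{k+1}=\neg(\alpha^k\wedge\neg\alpha^k)$. A $C_n$-bivaluation is a map $\mathsf{b}$ from formulas to $\{0,1\}$ such that: (B1) $\mathsf{b}(\alpha\wedge\beta)=1$ iff $\mathsf{b}(\alpha)=\mathsf{b}(\beta)=1$; (B2) $\mathsf{b}(\alpha\vee\beta)=1$ iff $\mathsf{b}(\alpha)=1$ or $\mathsf{b}(\beta)=1$; (B3) $\mathsf{b}(\alpha\to\beta)=1$ iff $\mathsf{b}(\alpha)=0$ or $\mathsf{b}(\beta)=1$; (B4) $\mathsf{b}(\alpha)=0$ implies $\mathsf{b}(\neg\alpha)=1$; (B5) $\mathsf{b}(\neg\neg\alpha)=1$ implies $\mathsf{b}(\alpha)=1$; (B6)$_n$ $\mathsf{b}(\alpha^{n-1})=\mathsf{b}(\neg(\alpha^{n-1}))$ iff $\mathsf{b}(\alpha^n)=0$; (B7) $\mathsf{b}(\alpha)=\mathsf{b}(\neg\alpha)$ iff $\mathsf{b}(\neg(\alpha^1))=1$; (B8) if $\mathsf{b}(\alpha)\ne\mathsf{b}(\neg\alpha)$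 and $\mathsf{b}(\beta)\ne\mathsf{b}(\neg\beta)$ then $\mathsf{b}(\alpha\#\beta)\ne\mathsf{b}(\neg(\alpha\#\beta))$ for $\#\in\{\wedge,\vee,\to\}$. Fix $n\ge2$. $B_n=\{z\in\{0,1\}^{n+1}:(z_1\wedge\dots\wedge z_k)\vee z_{k+1}=1\text{ for all }1\le k\le n\}$, with elements $T_n=(1,0,1,\dots,1)$, $t^n_i$ ($0\le i\le n-2$) having $z_1=z_2=1$ and a single $0$ at coordinate $i+3$, $t^n_{n-1}=(1,\dots,1)$, $F_n=(0,1,\dots,1)$. $D_n=\{z:z_1=1\}$, $Boo_n=\{T_n,F_n\}$, $I_n=B_n\setminus Boo_n$. $\mathcal{A}_{C_n}$ on $B_n$: $\tilde\neg z=\{w\in B_n:w_1=z_2,\ w_2\le z_1\}$; for $\#\in\{\wedge,\vee,\to\}$, $z\tilde\#w=\{u\in Boo_n:u_1=z_1\#w_1\}$ if $z,w\in Boo_n$, else $\{u\in B_n:u_1=z_1\#w_1\}$. A valuation is $\nu$ with $\nu(\neg\alpha)\in\tilde\neg\nu(\alpha)$, $\nu(\alpha\#\beta)\in\nu(\alpha)\tilde\#\nu(\beta)$. $\mathcal{F}_{C_n}$: valuations with $\nu(\alpha)=t^n_0\Rightarrow\nu(\alpha\wedge\neg\alpha)=T_n$, and for $1\le k\le n-1$, $\nu(\alpha)=t^n_k\Rightarrow(\nu(\alpha\wedge\neg\alpha)\in I_n$ and $\nu(\alpha^1)=t^n_{k-1})$. *)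

From mathcomp Require Import all_boot.
Set Implicit Arguments. Unset Strict Implicit. Unset Printing Implicit Defensive.

Inductive form : Type :=
| Var of nat
| Neg of form
| And of form & form
| Or  of form & form
| Imp of form & form.

Fixpoint fpow (a : form) (k : nat) : form :=
  match k with
  | 0 => a
  | k'.+1 => Neg (And (fpow a k') (Neg (fpow a k')))
  end.

Inductive bconn := cAnd | cOr | cImp.
Definition mk (c : bconn) (a b : form) : form :=
  match c with cAnd => And a b | cOr => Or a b | cImp => Imp a b end.
Definition bop (c : bconn) (x y : bool) : bool :=
  match c with cAnd => x && y | cOr => x || y | cImp => x ==> y end.

Definition is_bival (n : nat) (b : form -> bool) : Prop :=
  (forall a c, b (And a c) = true <-> b a = true /\ b c = true) /\          (* B1 *)
  (forall a c, b (Or a c) = true <-> b a = true \/ b c = true) /\           (* B2 *)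
  (forall a c, b (Imp a c) = true <-> b a = false \/ b c = true) /\         (* B3 *)
  (forall a, b a = false -> b (Neg a) = true) /\                            (* B4 *)
  (forall a, b (Neg (Neg a)) = true -> b a = true) /\                       (* B5 *)
  (forall a, b (fpow a n.-1) = b (Neg (fpow a n.-1)) <-> b (fpow a n) = false) /\ (* B6_n *)
  (forall a, b a = b (Neg a) <-> b (Neg (fpow a 1)) = true) /\              (* B7 *)
  (forall (c : bconn) a a', b a <> b (Neg a) -> b a' <> b (Neg a') ->
       b (mk c a a') <> b (Neg (mk c a a'))).                              (* B8 *)

(* An element z = (z_1,...,z_{n+1}) of {0,1}^{n+1} is represented by a
   finite function on 'I_n.+1; coordinate z_k (1-based) is z at index k-1. *)
Definition vec (n : nat) := {ffun 'I_n.+1 -> bool}.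

Definition crd n (z : vec n) (k : nat) : bool := z (inord k.-1).

Definition inB n (z : vec n) : Prop :=
  forall k, 1 <= k <= n ->
    (forall j, 1 <= j <= k -> crd z j = true) \/ crd z k.+1 = true.

Definition Tn n : vec n := [ffun j : 'I_n.+1 => val j != 1].
Definition Fn n : vec n := [ffun j : 'I_n.+1 => val j != 0].
(* t^n_i: for 0 <= i <= n-2, z_1 = z_2 = 1 and a single 0 at coordinate i+3;
   t^n_{n-1} = (1,...,1). *)
Definition tn n (i : nat) : vec n :=
  if i == n.-1 then [ffun _ : 'I_n.+1 => true]
  else [ffun j : 'I_n.+1 => val j != i.+2].

Definition inD n (z : vec n) : Prop := inB z /\ crd z 1 = true.
Definition inBoo n (z : vec n) : Prop := z = Tn n \/ z = Fn n.
Definition inI n (z : vec n) : Prop := inB z /\ ~ inBoo z.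

(* w in neg~ z *)
Definition negS n (z w : vec n) : Prop :=
  inB w /\ crd w 1 = crd z 2 /\ crd w 2 <= crd z 1.

(* u in z #~ w *)
Definition binS n (c : bconn) (z w u : vec n) : Prop :=
  (inBoo z /\ inBoo w -> inBoo u /\ crd u 1 = bop c (crd z 1) (crd w 1)) /\
  (~ (inBoo z /\ inBoo w) -> inB u /\ crd u 1 = bop c (crd z 1) (crd w 1)).

Definition is_valuation n (nu : form -> vec n) : Prop :=
  (forall a, inB (nu a)) /\
  (forall a, negS (nu a) (nu (Neg a))) /\
  (forall (c : bconn) a a', binS c (nu a) (nu a') (nu (mk c a a'))).

Definition in_FCn n (nu : form -> vec n) : Prop :=
  is_valuation nu /\
  (forall a, nu a = tn n 0 -> nu (And a (Neg a)) = Tn n) /\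
  (forall a k, 1 <= k <= n.-1 -> nu a = tn n k ->
      inI (nu (And a (Neg a))) /\ nu (fpow a 1) = tn n k.-1).

From mathcomp Require Import all_boot zify.
Set Implicit Arguments. Unset Strict Implicit. Unset Printing Implicit Defensive.

(* The Nmatrix gives b(~a) = nu(a)_2 and nu(~a)_2 <= nu(a)_1, and b commutes
   with the binary connectives; together with z_1 || z_2 (valid in B_n) this
   yields B1-B5.  The rest rests on a description of B_n (for n >= 1): in B_n
   every coordinate after a 0 is a 1, so a vector is Boolean iff z_1 != z_2,
   i.e. iff b(a) != b(~a), and a vector with z_1 = z_2 = 1 is some t^n_m.
   Hence B8 is the closure of Boo_n under the binary operations.  The
   conditions defining F_{C_n} say that a |-> a^1 sends t^n_0 to F_n and t^n_m
   to t^n_{m-1}, while Boolean values go to T_n.  Along the orbit a, a^1, a^2,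
   ... a value t^n_m thus becomes Boolean after m+1 steps, so a non-Boolean
   a^{n-1} has value t^n_0: this gives B6_n, and the one-step behaviour gives
   B7.  Coordinates are numbered from 1, as in the paper. *)

Section Vectors.
Variable n : nat.
Hypothesis n_gt0 : 0 < n.

Lemma crd_val (z : vec n) (j : 'I_n.+1) : crd z j.+1 = z j.
Proof. by rewrite /crd /= inord_val. Qed.

Lemma vec_crdP (z w : vec n) :
  (forall k, 0 < k <= n.+1 -> crd z k = crd w k) -> z = w.
Proof. by move=> Ezw; apply/ffunP=> j; rewrite -!crd_val Ezw // ltn_ord. Qed.

Lemma crd_Tn k : 0 < k <= n.+1 -> crd (Tn n) k = (k != 2).
Proof. by move=> hk; rewrite /crd ffunE /= inordK /=; lia. Qed.

Lemma crd_Fn k : 0 < k <= n.+1 -> crd (Fn n) k = (k != 1).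
Proof. by move=> hk; rewrite /crd ffunE /= inordK /=; lia. Qed.

Lemma crd_tn m k : m < n.-1 -> 0 < k <= n.+1 -> crd (tn n m) k = (k != m.+3).
Proof.
by move=> hm hk; rewrite /tn ifN; [rewrite /crd ffunE /= inordK /=|]; lia.
Qed.

Lemma crd_tn_last k : crd (tn n n.-1) k = true.
Proof. by rewrite /tn eqxx /crd ffunE. Qed.

Lemma crd_tn12 m : crd (tn n m) 1 && crd (tn n m) 2.
Proof. by rewrite /tn; case: ifP => _; rewrite /crd !ffunE //= !inordK. Qed.

Lemma inB_crd12 (z : vec n) : inB z -> crd z 1 || crd z 2.
Proof. by move=> zB; have [||->] := zB 1; [lia | move/(_ 1 isT) -> | rewrite orbT]. Qed.

Lemma inB_after_zero (z : vec n) j k : inB z -> 0 < j < k -> k <= n.+1 ->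
  crd z j = false -> crd z k = true.
Proof.
move=> zB hjk hkn zj.
have [|allk|] := zB k.-1; first lia.
- by have := allk j ltac:(lia); rewrite zj.
- by rewrite prednK //; lia.
Qed.

Lemma inB_Tn (z : vec n) : inB z -> crd z 1 -> ~~ crd z 2 -> z = Tn n.
Proof.
move=> zB z1 /negbTE z2; apply: vec_crdP => k hk; rewrite crd_Tn //.
case: k hk => [|[|[|k]]] hk //; apply: (inB_after_zero (j := 2)) => //; lia.
Qed.

Lemma inB_Fn (z : vec n) : inB z -> ~~ crd z 1 -> z = Fn n.
Proof.
move=> zB /negbTE z1; apply: vec_crdP => k hk; rewrite crd_Fn //.
case: k hk => [|[|k]] hk //; apply: (inB_after_zero (j := 1)) => //; lia.
Qed.

Lemma inBooE (z : vec n) : inB z -> inBoo z <-> crd z 1 != crd z 2.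
Proof.
move=> zB; split=> [[->|->]|]; first by rewrite !crd_Tn.
  by rewrite !crd_Fn.
case/orP: (inB_crd12 zB); case z1: (crd z 1); case z2: (crd z 2) => // _ _.
  by left; apply: inB_Tn => //; rewrite ?z1 ?z2.
by right; apply: inB_Fn => //; rewrite z1.
Qed.

(* An element of B_n starting with (1,1) is some t^n_m: its first zero,
   if any, sits at a coordinate m+3 and is followed by ones only. *)
Lemma inB_tn (z : vec n) : inB z -> crd z 1 -> crd z 2 ->
  exists2 m, m <= n.-1 & z = tn n m.
Proof.
move=> zB z1 z2; pose P k := (0 < k <= n.+1) && ~~ crd z k.
have [j zj|allz] := pickP [pred k : 'I_n.+1 | ~~ z k]; last first.
  exists n.-1 => //; apply: vec_crdP => k hk; rewrite crd_tn_last.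
  by have := allz (inord k.-1); rewrite /crd /= => /negbFE.
have exP : exists k, P k by exists j.+1; rewrite /P crd_val ltn_ord.
case: (ex_minnP exP) => m /andP[hm /negbTE zm] minm.
have m3 : 2 < m by case: m hm zm {minm} => [|[|[|m]]] //=; rewrite ?z1 ?z2.
exists (m - 3); first lia.
apply: vec_crdP => k hk; rewrite crd_tn; try lia.
rewrite (_ : (m - 3).+3 = m); last lia.
have [ltkm|ltmk|->] := ltngtP k m; last by rewrite zm.
- apply/negbNE/negP => zk.
  by have := minm k; rewrite /P hk zk => /(_ isT); rewrite leqNgt ltkm.
- by rewrite (inB_after_zero (j := m)) //; lia.
Qed.
End Vectors.

Section Valuations.
Variables (n : nat) (nu : form -> vec n).
Hypotheses (n_gt0 : 0 < n) (nu_val : is_valuation nu).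

Let nu_B a : inB (nu a) := nu_val.1 a.

Lemma crd_Neg1 a : crd (nu (Neg a)) 1 = crd (nu a) 2.
Proof. by have [_ []] := nu_val.2.1 a. Qed.

Lemma crd_Neg2 a : crd (nu (Neg a)) 2 -> crd (nu a) 1.
Proof. by have [_ [_]] := nu_val.2.1 a; case: (crd _ 2); case: (crd _ 1). Qed.

Lemma inBoo_nu a : inBoo (nu a) <-> crd (nu a) 1 != crd (nu (Neg a)) 1.
Proof. by rewrite crd_Neg1; apply: inBooE. Qed.

(* b commutes with the binary connectives, whether or not the arguments
   are Boolean (which inBoo_nu makes decidable). *)
Lemma crd_mk1 c a a' :
  crd (nu (mk c a a')) 1 = bop c (crd (nu a) 1) (crd (nu a') 1).
Proof.
have [Hboo Hgen] := nu_val.2.2 c a a'.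
have [Boo|nBoo] := boolP ((crd (nu a) 1 != crd (nu (Neg a)) 1) &&
                          (crd (nu a') 1 != crd (nu (Neg a')) 1)).
  by case/andP: Boo => /inBoo_nu ba /inBoo_nu ba'; case: (Hboo (conj ba ba')).
by case: Hgen => // -[/inBoo_nu ba /inBoo_nu ba']; rewrite ba ba' in nBoo.
Qed.

Lemma mk_inBoo c a a' :
  inBoo (nu a) -> inBoo (nu a') -> inBoo (nu (mk c a a')).
Proof. by move=> ba ba'; have [/(_ (conj ba ba'))[]] := nu_val.2.2 c a a'. Qed.

Lemma Neg_Fn a : nu a = Fn n -> nu (Neg a) = Tn n.
Proof.
move=> aF; apply: inB_Tn => //; first by rewrite crd_Neg1 aF crd_Fn.
by apply/negP => /crd_Neg2; rewrite aF crd_Fn.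
Qed.

Lemma Neg_Tn a : nu a = Tn n -> nu (Neg a) = Fn n.
Proof. by move=> aT; apply: inB_Fn => //; rewrite crd_Neg1 aT crd_Tn. Qed.

Lemma crd_contra1 a :
  crd (nu (And a (Neg a))) 1 = crd (nu a) 1 && crd (nu a) 2.
Proof. by rewrite (crd_mk1 cAnd) crd_Neg1. Qed.

(* For Boolean nu(a), a /\ ~a is undesignated, hence F_n, and a^1 is T_n. *)
Lemma fpow1_inBoo a : inBoo (nu a) -> nu (fpow a 1) = Tn n.
Proof.
move=> /inBoo_nu; rewrite crd_Neg1 => ba; apply: Neg_Fn; apply: inB_Fn => //.
by rewrite crd_contra1; move: ba; case: (crd _ 1); case: (crd _ 2).
Qed.

Lemma nu_nonBoo a :
  crd (nu a) 1 = crd (nu (Neg a)) 1 <-> crd (nu a) 1 && crd (nu a) 2.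
Proof.
rewrite crd_Neg1; move: (inB_crd12 n_gt0 (nu_B a)).
by case: (crd _ 1); case: (crd _ 2); split.
Qed.

(* If a^1 is undesignated, or has second coordinate 1, then a /\ ~a is
   designated, so nu(a) starts with (1,1). *)
Lemma fpow1_false a : crd (nu (fpow a 1)) 1 = false -> crd (nu a) 1 && crd (nu a) 2.
Proof.
rewrite crd_Neg1 -crd_contra1 => c2.
by move: (inB_crd12 n_gt0 (nu_B (And a (Neg a)))); rewrite c2 orbF.
Qed.

Lemma fpow1_crd2_inv a : crd (nu (fpow a 1)) 2 -> crd (nu a) 1 && crd (nu a) 2.
Proof. by rewrite -crd_contra1; apply: crd_Neg2. Qed.
End Valuations.

Lemma fpowS a j : fpow a j.+1 = fpow (fpow a j) 1.
Proof. by []. Qed.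

Lemma fpow_predn a n : 0 < n -> fpow a n = fpow (fpow a n.-1) 1.
Proof. by move=> n_gt0; rewrite -fpowS prednK. Qed.

Section FCn.
Variables (n : nat) (nu : form -> vec n).
Hypotheses (n_gt0 : 0 < n) (nu_F : in_FCn nu).

Let nu_val : is_valuation nu := nu_F.1.
Let nu_B a : inB (nu a) := nu_val.1 a.

Lemma fpow1_t0 a : nu a = tn n 0 -> nu (fpow a 1) = Fn n.
Proof. by move=> at0; apply: Neg_Tn => //; apply: nu_F.2.1. Qed.

Lemma fpow1_tn a m : 0 < m <= n.-1 -> nu a = tn n m -> nu (fpow a 1) = tn n m.-1.
Proof. by move=> hm atm; have [] := nu_F.2.2 a m hm atm. Qed.

(* If nu(a) starts with (1,1), then nu(a^1) is F_n or some t^n_m, so its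
   second coordinate is 1. *)
Lemma fpow1_crd2 a : crd (nu a) 1 -> crd (nu a) 2 -> crd (nu (fpow a 1)) 2.
Proof.
move=> a1 a2; have [[|m] hm atm] := inB_tn n_gt0 (nu_B a) a1 a2.
  by rewrite fpow1_t0 // crd_Fn.
by rewrite (fpow1_tn (m := m.+1)) //; case/andP: (crd_tn12 n_gt0 m).
Qed.

Lemma fpow_orbit a j : inBoo (nu (fpow a j)) \/
  exists2 m, m + j <= n.-1 & nu (fpow a j) = tn n m.
Proof.
elim: j => [|j [ajB|[[|m] hm ajm]]].
- have [aB|naB] := boolP (crd (nu a) 1 != crd (nu a) 2).
    by left; apply/(inBooE n_gt0 (nu_B a)).
  have [a1 a2] : crd (nu a) 1 /\ crd (nu a) 2.
    by move: naB (inB_crd12 n_gt0 (nu_B a)); case: (crd _ 1); case: (crd _ 2).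
  by right; have [m hm ->] := inB_tn n_gt0 (nu_B a) a1 a2; exists m; rewrite ?addn0.
- by left; rewrite fpowS fpow1_inBoo //; left.
- by left; rewrite fpowS fpow1_t0 //; right.
- by right; exists m; [lia | rewrite fpowS (fpow1_tn (m := m.+1)) //; lia].
Qed.
End FCn.

Section Bivaluation.
Variables (n : nat) (nu : form -> vec n).
Hypotheses (n_gt0 : 0 < n) (nu_F : in_FCn nu).

Let nu_val : is_valuation nu := nu_F.1.
Let nu_B a : inB (nu a) := nu_val.1 a.

Lemma bival_Neg a : crd (nu a) 1 = false -> crd (nu (Neg a)) 1 = true.
Proof.
by rewrite (crd_Neg1 nu_val) => a1; move: (inB_crd12 n_gt0 (nu_B a)); rewrite a1.
Qed.

Lemma bival_NegNeg a : crd (nu (Neg (Neg a))) 1 = true -> crd (nu a) 1 = true.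
Proof. by rewrite (crd_Neg1 nu_val); apply: (crd_Neg2 nu_val). Qed.

Lemma bival_fpow_n a :
  crd (nu (fpow a n.-1)) 1 = crd (nu (Neg (fpow a n.-1))) 1 <->
  crd (nu (fpow a n)) 1 = false.
Proof.
rewrite (fpow_predn a n_gt0) (nu_nonBoo n_gt0 nu_val); split; last exact: fpow1_false.
case/andP=> x1 x2; have [xB|[m hm xm]] := fpow_orbit n_gt0 nu_F a n.-1.
  by move/(inBooE n_gt0 (nu_B _)): xB; rewrite x1 x2.
have m0 : m = 0 by lia.
by rewrite m0 in xm; rewrite (fpow1_t0 n_gt0 nu_F xm) crd_Fn.
Qed.

Lemma bival_contra a :
  crd (nu a) 1 = crd (nu (Neg a)) 1 <-> crd (nu (Neg (fpow a 1))) 1 = true.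
Proof.
rewrite (nu_nonBoo n_gt0 nu_val) (crd_Neg1 nu_val); split; last exact: fpow1_crd2_inv.
by case/andP; apply: fpow1_crd2.
Qed.

Lemma bival_Boo c a a' :
  crd (nu a) 1 <> crd (nu (Neg a)) 1 -> crd (nu a') 1 <> crd (nu (Neg a')) 1 ->
  crd (nu (mk c a a')) 1 <> crd (nu (Neg (mk c a a'))) 1.
Proof.
move=> /eqP/(inBoo_nu n_gt0 nu_val) aB /eqP/(inBoo_nu n_gt0 nu_val) a'B.
by apply/eqP/(inBoo_nu n_gt0 nu_val); apply: mk_inBoo.
Qed.

(* b is a C_n-bivaluation; B1-B3 come from crd_mk1. *)
Lemma FCn_bival : is_bival n (fun a => crd (nu a) 1).
Proof.
have mk1 := crd_mk1 n_gt0 nu_val.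
do 3 (split; first by move=> a a';
        first [rewrite (mk1 cAnd) | rewrite (mk1 cOr) | rewrite (mk1 cImp)];
        case: (crd (nu a) 1); case: (crd (nu a') 1); intuition congruence).
exact: (conj bival_Neg (conj bival_NegNeg (conj bival_fpow_n
         (conj bival_contra bival_Boo)))).
Qed.
End Bivaluation.

Theorem mainTheorem11 (n : nat) (nu : form -> vec n) :
  2 <= n -> in_FCn nu ->
  is_bival n (fun a => crd (nu a) 1) /\
  (forall a, crd (nu a) 1 = true <-> inD (nu a)).
Proof.
move=> n_ge2 nu_F; have n_gt0 : 0 < n by apply: ltnW.
split; first exact: FCn_bival.
by move=> a; split=> [a1|[]//]; split=> //; apply: nu_F.1.1.
Qed.
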